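(* For every positive integer $r$, each column of the matrix $S_r$ has exactly $2^{r-1}$ entries equal to $1$, and each row of $S_r$ has exactly $2^r-1$ entries equal to $1$.
   Context: Define $\{0,1\}$-matrices $S_r$ recursively. Let $S_1=I_2$. For $r\ge1$ let $F_r=I_{2^r-1}\otimes\begin{pmatrix}0&1\\1&0\end{pmatrix}$, and let $1_r$, $0_r$ denote the $2^r\times1$ all-ones and all-zeros column vectors. For $r\ge2$ set $S_r=\big(B_r^{(i)}\ B_r^{(ii)}\ B_r^{(iii)}\big)$ (horizontal concatenation) with $$B_r^{(i)}=\begin{pmatrix}1_{r-1}&0_{r-1}\\0_{r-1}&1_{r-1}\end{pmatrix},\quad B_r^{(ii)}=\begin{pmatrix}S_{r-1}\\S_{r-1}\end{pmatrix},\quad B_r^{(iii)}=\begin{pmatrix}S_{r-1}\\S_{r-1}F_{r-1}\end{pmatrix}.$$ Then $S_r$ has $2^r$ rows and $c_r=2^{r+1}-2$ columns. *)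

From mathcomp Require Import all_boot all_order all_algebra.
Set Implicit Arguments. Unset Strict Implicit. Unset Printing Implicit Defensive.
Import GRing.Theory.
Local Open Scope ring_scope.

(* Index shift: for n : nat, the level is r = n.+1.
   srows n = number of rows of S_(n+1)   (= 2^(n+1)),
   scols n = number of columns of S_(n+1) (= 2^(n+2) - 2 = c_(n+1)).
   They are defined recursively so that the block concatenations typecheck. *)
Fixpoint srows (n : nat) : nat :=
  match n with 0 => 2 | n'.+1 => (srows n' + srows n')%N end.
Fixpoint scols (n : nat) : nat :=
  match n with 0 => 2 | n'.+1 => (2 + (scols n' + scols n'))%N end.

(* F_r = I_{2^r - 1} (x) [[0,1],[1,0]] written entrywise (Kronecker product):
   entry (2a+b, 2a'+b') = delta_{a a'} * [b != b']. Its size is 2^(r+1)-2 = c_r. *)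
Definition Fmx (m : nat) : 'M[int]_m :=
  \matrix_(k < m, l < m) ((k %/ 2 == l %/ 2)%N && (k != l :> nat))%:R.

Definition Bi (h : nat) : 'M[int]_(h + h, 2) :=
  col_mx (\matrix_(i < h, j < 2) (j == 0 :> nat)%:R)
         (\matrix_(i < h, j < 2) (j == 1 :> nat)%:R).

Fixpoint Smx (n : nat) : 'M[int]_(srows n, scols n) :=
  match n return 'M[int]_(srows n, scols n) with
  | 0 => 1%:M
  | n'.+1 =>
      let S := Smx n' in
      row_mx (Bi (srows n'))
        (row_mx (col_mx S S) (col_mx S (S *m Fmx (scols n'))))
  end.

Definition S (r : nat) : 'M[int]_(srows r.-1, scols r.-1) := Smx r.-1.

From mathcomp Require Import all_boot all_order all_algebra zify.
Set Implicit Arguments. Unset Strict Implicit. Unset Printing Implicit Defensive.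
Import GRing.Theory.
Local Open Scope ring_scope.

(* Counting ones is additive over the blocks of a block
   matrix, B_r^(i) has one 1 per row and 2^(r-1) per column, and
   right multiplication by F_(r-1) swaps the columns 2a and 2a+1, so it
   preserves row counts and only permutes column counts. *)

Definition col_ones m n (A : 'M[int]_(m, n)) (j : 'I_n) := #|[set i | A i j == 1]|.
Definition row_ones m n (A : 'M[int]_(m, n)) (i : 'I_m) := #|[set j | A i j == 1]|.

Lemma natr_bool_eq1 (b : bool) : (b%:R == 1 :> int) = b.
Proof. by case: b. Qed.

Lemma card_split_ord a b (P : pred 'I_(a + b)) :
  #|[set x | P x]| =
  (#|[set x : 'I_a | P (lshift b x)]| + #|[set x : 'I_b | P (rshift a x)]|)%N.
Proof.
rewrite !cardE !size_filter -!sum1_count big_mkcond big_split_ord /=.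
by congr (_ + _); rewrite [RHS]big_mkcond; apply: eq_bigr => i _; rewrite !inE.
Qed.

Section BlockCounts.
Variables m1 m2 n1 n2 : nat.

Lemma col_ones_col_mx (A : 'M_(m1, n1)) (B : 'M_(m2, n1)) j :
  col_ones (col_mx A B) j = (col_ones A j + col_ones B j)%N.
Proof.
rewrite /col_ones card_split_ord.
by congr (_ + _)%N; apply: eq_card => i; rewrite !inE ?col_mxEu ?col_mxEd.
Qed.

Lemma row_ones_row_mx (A : 'M_(m1, n1)) (B : 'M_(m1, n2)) i :
  row_ones (row_mx A B) i = (row_ones A i + row_ones B i)%N.
Proof.
rewrite /row_ones card_split_ord.
by congr (_ + _)%N; apply: eq_card => j; rewrite !inE ?row_mxEl ?row_mxEr.
Qed.

Lemma col_ones_row_mxl (A : 'M_(m1, n1)) (B : 'M_(m1, n2)) j :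
  col_ones (row_mx A B) (lshift n2 j) = col_ones A j.
Proof. by apply: eq_card => i; rewrite !inE row_mxEl. Qed.

Lemma col_ones_row_mxr (A : 'M_(m1, n1)) (B : 'M_(m1, n2)) j :
  col_ones (row_mx A B) (rshift n1 j) = col_ones B j.
Proof. by apply: eq_card => i; rewrite !inE row_mxEr. Qed.

Lemma row_ones_col_mxu (A : 'M_(m1, n1)) (B : 'M_(m2, n1)) i :
  row_ones (col_mx A B) (lshift m2 i) = row_ones A i.
Proof. by apply: eq_card => j; rewrite !inE col_mxEu. Qed.

Lemma row_ones_col_mxd (A : 'M_(m1, n1)) (B : 'M_(m2, n1)) i :
  row_ones (col_mx A B) (rshift m1 i) = row_ones B i.
Proof. by apply: eq_card => j; rewrite !inE col_mxEd. Qed.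

End BlockCounts.

Lemma col_ones_scalar1 n (j : 'I_n) : col_ones (1%:M : 'M[int]_n) j = 1%N.
Proof.
rewrite /col_ones -(cards1 j).
by apply: eq_card => i; rewrite !inE mxE natr_bool_eq1.
Qed.

Lemma row_ones_scalar1 n (i : 'I_n) : row_ones (1%:M : 'M[int]_n) i = 1%N.
Proof.
rewrite /row_ones -(cards1 i).
by apply: eq_card => j; rewrite !inE mxE natr_bool_eq1 eq_sym.
Qed.

Lemma col_ones_const_rows h n (f : 'I_n -> int) j :
  col_ones (\matrix_(i < h, k < n) f k) j = if f j == 1 then h else 0%N.
Proof.
rewrite /col_ones; under eq_finset => i do rewrite mxE.
case: (f j == 1); last by rewrite -(cards0 'I_h); apply: eq_card => i; rewrite !inE.
by rewrite -[RHS](card_ord h) -cardsT; apply: eq_card => i; rewrite !inE.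
Qed.

Lemma col_ones_Bi h j : col_ones (Bi h) j = h.
Proof.
rewrite col_ones_col_mx !col_ones_const_rows.
by case: j => [[|[|//]] ?]; rewrite /= ?addn0.
Qed.

Lemma row_ones_Bi h i : row_ones (Bi h) i = 1%N.
Proof.
case: (split_ordP i) => k ->;
  [rewrite row_ones_col_mxu /row_ones (_ : [set _ | _] = [set ord0]) ?cards1 //
  |rewrite row_ones_col_mxd /row_ones (_ : [set _ | _] = [set ord_max]) ?cards1 //];
  by apply/setP => j; rewrite !inE mxE natr_bool_eq1; case: j => [[|[|//]] ?].
Qed.

(* [partner] exchanges 2a and 2a+1; [Fmx] is the permutation matrix of this involution. *)
Definition partner (k : nat) := if odd k then k.-1 else k.+1.

Lemma partnerK : involutive partner.
Proof.
case=> [|k] //; rewrite /partner /=.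
by case: (boolP (odd k)) => odd_k /=; rewrite ?odd_k ?(negbTE odd_k).
Qed.

Lemma same_pair_neqE (k l : nat) :
  ((k %/ 2 == l %/ 2)%N && (k != l)) = (k == partner l).
Proof.
rewrite /partner; have := modn2 l.
by case: ifP => _ l_mod2; apply/idP/eqP => [/andP[/eqP ? /eqP ?] | ->];
  [lia | apply/andP; split; apply/eqP; lia | lia | apply/andP; split; apply/eqP; lia].
Qed.

Lemma FmxE m (k l : 'I_m) : Fmx m k l = (k == partner l :> nat)%:R.
Proof. by rewrite mxE same_pair_neqE. Qed.

Section PartnerColumns.
Variable m : nat.
Hypothesis m_even : ~~ odd m.

Lemma partner_ltn (j : 'I_m) : (partner j < m)%N.
Proof.
rewrite /partner; case: ifP => odd_j; first by rewrite (leq_ltn_trans (leq_pred j)).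
rewrite ltn_neqAle ltn_ord andbT; apply: contra m_even => /eqP <-.
by rewrite /= odd_j.
Qed.

Definition partner_ord (j : 'I_m) : 'I_m := Ordinal (partner_ltn j).

Lemma partner_ordK : involutive partner_ord.
Proof. by move=> j; apply: val_inj; exact: partnerK. Qed.

Lemma mulmx_FmxE h (A : 'M[int]_(h, m)) i j : (A *m Fmx m) i j = A i (partner_ord j).
Proof.
rewrite mxE (bigD1 (partner_ord j)) //= big1 => [|k ne_kj].
  by rewrite FmxE eqxx mulr1 addr0.
by rewrite FmxE (negbTE (ne_kj : (k : nat) != partner j)) mulr0.
Qed.

Lemma col_ones_mulmx_Fmx h (A : 'M[int]_(h, m)) j :
  col_ones (A *m Fmx m) j = col_ones A (partner_ord j).
Proof. by apply: eq_card => i; rewrite !inE mulmx_FmxE. Qed.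

Lemma row_ones_mulmx_Fmx h (A : 'M[int]_(h, m)) i :
  row_ones (A *m Fmx m) i = row_ones A i.
Proof.
rewrite /row_ones -(card_preimset _ (can_inj partner_ordK)).
by apply: eq_card => j; rewrite !inE mulmx_FmxE partner_ordK.
Qed.

End PartnerColumns.

Lemma srowsE n : srows n = (2 ^ n.+1)%N.
Proof. by elim: n => //= n ->; rewrite addnn -mul2n -expnS. Qed.

Lemma scols_even n : ~~ odd (scols n).
Proof. by elim: n => //= n _; rewrite addnn odd_double. Qed.

Lemma SmxS n :
  Smx n.+1 = row_mx (Bi (srows n))
               (row_mx (col_mx (Smx n) (Smx n)) (col_mx (Smx n) (Smx n *m Fmx (scols n)))).
Proof. by []. Qed.

Lemma Smx_ones n :
  (forall j, col_ones (Smx n) j = 2 ^ n)%N /\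
  (forall i, row_ones (Smx n) i = 2 ^ n.+1 - 1)%N.
Proof.
elim: n => [|n [IHc IHr]].
  by split=> k; rewrite /= ?col_ones_scalar1 ?row_ones_scalar1.
have pos : (0 < 2 ^ n)%N by rewrite expn_gt0.
split=> [j | i]; rewrite SmxS.
- case: (split_ordP j) => k ->.
    by rewrite col_ones_row_mxl col_ones_Bi; exact: srowsE.
  rewrite col_ones_row_mxr; case: (split_ordP k) => l ->;
    rewrite ?col_ones_row_mxl ?col_ones_row_mxr !col_ones_col_mx
            ?(col_ones_mulmx_Fmx (scols_even n)) !IHc expnS; lia.
- rewrite !row_ones_row_mx row_ones_Bi; case: (split_ordP i) => k ->;
    rewrite ?row_ones_col_mxu ?row_ones_col_mxd
            ?(row_ones_mulmx_Fmx (scols_even n)) !IHr !expnS; lia.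
Qed.

Theorem lemma4p2 (r : nat) (hr : (0 < r)%N) :
  (forall j : 'I_(scols r.-1),
      #|[set i : 'I_(srows r.-1) | S r i j == 1]| = (2 ^ r.-1)%N) /\
  (forall i : 'I_(srows r.-1),
      #|[set j : 'I_(scols r.-1) | S r i j == 1]| = (2 ^ r - 1)%N).
Proof. by case: r hr => // n _; exact: Smx_ones. Qed.
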